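(* Let $k$ be a field, $M$ a regular matroid of rank $r$ on $E=\{e_1<\cdots<e_n\}$ with basis $B=\{e_{n-r+1},\ldots,e_n\}$ and an admissible signed fundamental cocircuit incidence matrix $(a^*_{ji})$ w.r.t. $B$. Label the circuits $C_1,\ldots,C_m$ of $M$ so that $C_i=\mathrm{ci}(B,e_i)$ for $1\le i\le n-r$. Define $d_j=j$ for $j\le n-r$ and $d_j=\min\{i: e_i\in\mathrm{coc}(B,e_j)\}$ for $j\ge n-r+1$, and set $m_{C_i}=x_i^{|\overline{C}_i|}$ if $i\le n-r$ and $m_{C_i}=\prod_{e_j\in\overline{C}_i}x_{d_j}$ if $i\ge n-r+1$. Let $p_C$ be the polynomial obtained from $\prod_{e_j\in\overline{C}}x_j$ by substituting, for every $j\ge n-r+1$, $x_j=-(a^*_{jj})^{-1}\sum_{e_i\in\mathrm{coc}(B,e_j),\,i\ne j}a^*_{ji}x_i$. Then for every circuit $C$ of $M$, the monomial $m_C$ occurs (up to sign) as a term of $p_C$.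
   Context: For $e\notin B$, $\mathrm{ci}(B,e)$ is the unique circuit contained in $B\cup\{e\}$; for $b\in B$, $\mathrm{coc}(B,b)$ is the unique cocircuit contained in $(E\setminus B)\cup\{b\}$ and containing $b$. $\overline{C}=C\setminus\{\min C\}$. The fundamental cocircuit incidence matrix has rows indexed by $\mathrm{coc}(B,e_j)$, $e_j\in B$, columns by $e_1,\ldots,e_n$, with $0/1$ incidence entries. A signing replaces some $1$'s by $-1$; it is admissible over $k$ if it is the restriction of a signing of the full cocircuit incidence matrix for which some signing of the full circuit incidence matrix satisfies $\widetilde{\mathcal{A}}_M(\mathcal{C})\widetilde{\mathcal{A}}_M(\mathcal{C}^* )^T=0$ over $k$. *)

From mathcomp Require Import all_boot all_order all_algebra.
From mathcomp Require Import mpoly.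
Set Implicit Arguments. Unset Strict Implicit. Unset Printing Implicit Defensive.
Import GRing.Theory.
Local Open Scope ring_scope.

(* ground set E = 'I_n, e_{i+1} <-> i, ordered by the natural order on 'I_n *)
Section Matroid.
Variable n : nat.
Implicit Types (Cs : {set {set 'I_n}}) (S B D C : {set 'I_n}).

Definition matroid_circuits Cs : Prop :=
  [/\ set0 \notin Cs,
      {in Cs &, forall C1 C2, C1 \subset C2 -> C1 = C2} &
      {in Cs &, forall C1 C2 e, C1 != C2 -> e \in C1 :&: C2 ->
         exists2 C3, C3 \in Cs & C3 \subset (C1 :|: C2) :\ e}].

Definition mindep Cs S : bool := [forall C in Cs, ~~ (C \subset S)].

Definition mbasis Cs S : bool :=
  mindep Cs S && [forall e, (e \notin S) ==> ~~ mindep Cs (e |: S)].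

Definition meets_all_bases Cs D : bool :=
  [forall S : {set 'I_n}, mbasis Cs S ==> (D :&: S != set0)].

Definition cocircuits Cs : {set {set 'I_n}} :=
  [set D | meets_all_bases Cs D &&
           [forall D' : {set 'I_n}, (D' \proper D) ==> ~~ meets_all_bases Cs D']].

Definition fund_circuit Cs B (e : 'I_n) : {set 'I_n} :=
  odflt set0 [pick C in Cs | C \subset e |: B].

Definition fund_cocircuit Cs B (b : 'I_n) : {set 'I_n} :=
  odflt set0 [pick D in cocircuits Cs | (b \in D) && (D \subset b |: ~: B)].

Definition Cbar C : {set 'I_n} :=
  [set e in C | [exists e', (e' \in C) && (e' < e)%N]].

Definition representable_over (F : fieldType) Cs : Prop :=
  exists (m : nat) (A : 'M[F]_(m, n)), forall S,
    mindep Cs S <->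
    \rank (\matrix_(i, j) (if j \in S then A i j else 0)) = #|S|.

Definition regular_matroid Cs : Prop := forall F : fieldType, representable_over F Cs.

Definition signing (k : fieldType) (X : {set {set 'I_n}})
   (sg : {set 'I_n} -> 'I_n -> k) : Prop :=
  forall D, D \in X -> forall e,
    (e \in D -> sg D e = 1 \/ sg D e = -1) /\ (e \notin D -> sg D e = 0).

Definition admissible (k : fieldType) Cs B (a : 'I_n -> 'I_n -> k) : Prop :=
  exists (sg sgs : {set 'I_n} -> 'I_n -> k),
    [/\ signing (cocircuits Cs) sgs, signing Cs sg,
        (forall C D, C \in Cs -> D \in cocircuits Cs ->
            \sum_(e < n) sg C e * sgs D e = 0) &
        (forall j i, j \in B -> a j i = sgs (fund_cocircuit Cs B j) i)].

Definition didx Cs B (j : 'I_n) : 'I_n :=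
  if j \in B then [arg min_(i < j in fund_cocircuit Cs B j) (i : nat)] else j.

Definition mC Cs B C : 'X_{1..n} :=
  match [pick i | (i \notin B) && (C \subset i |: B)] with
  | Some i => (U_(i) *+ #|Cbar C|)%MM
  | None => (\sum_(j in Cbar C) U_(didx Cs B j))%MM
  end.

Definition subst_var (k : fieldType) Cs B (a : 'I_n -> 'I_n -> k) (j : 'I_n)
  : {mpoly k[n]} :=
  if j \in B then
    - (a j j)^-1 *: \sum_(i in fund_cocircuit Cs B j | i != j) a j i *: 'X_i
  else 'X_j.

Definition pC (k : fieldType) Cs B (a : 'I_n -> 'I_n -> k) C : {mpoly k[n]} :=
  \prod_(j in Cbar C) subst_var Cs B a j.
End Matroid.

(** The substitution turns each factor [x_j] of [p_C] into a linear form.  Choose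
    a weight on the variables for which, in every factor, the variable [x_(d j)]
    (resp. [x_i] for the fundamental circuit [C_i]) strictly outweighs all the
    others.  Then [m_C] is the unique heaviest monomial of [p_C], and its
    coefficient is the product of the leading coefficients [-(a*_jj)^-1 a*_ji]
    of the factors, all of which are signs.  That the required variable really
    occurs in every factor is orthogonality: a circuit and a cocircuit cannot
    meet in exactly one element, so [coc(B, e_j)] meets [C] again outside [B]. *)

From HB Require Import structures.
From mathcomp Require Import all_boot all_order all_algebra.
From mathcomp Require Import mpoly.
From mathcomp Require Import zify.
Import GRing.Theory.
Local Open Scope ring_scope.
Set Implicit Arguments. Unset Strict Implicit. Unset Printing Implicit Defensive.

Section WeightedDegree.
Variables (n : nat) (w : 'I_n -> nat).

Definition wdeg (m : 'X_{1..n}) : nat := (\sum_(i < n) m i * w i)%N.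

Lemma wdeg0 : wdeg 0%MM = 0%N.
Proof. by rewrite /wdeg big1 // => i _; rewrite mnm0E. Qed.

Lemma wdegD : {morph wdeg : m1 m2 / (m1 + m2)%MM >-> (m1 + m2)%N}.
Proof.
move=> m1 m2; rewrite /wdeg -big_split.
by apply: eq_bigr => i _; rewrite mnmDE mulnDl.
Qed.

Lemma wdegU (i : 'I_n) : wdeg U_(i)%MM = w i.
Proof.
rewrite /wdeg (bigD1 i) //= mnm1E eqxx mul1n big1 ?addn0 // => j /negbTE.
by rewrite mnm1E eq_sym => ->.
Qed.

End WeightedDegree.

HB.instance Definition _ n w := isMeasure.Build n (@wdeg n w) (wdeg0 w) (wdegD w).

Lemma mnm_sum_const (T : finType) (A : {pred T}) n (m : 'X_{1..n}) :
  (\sum_(i in A) m)%MM = (m *+ #|A|)%MM.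
Proof. by apply/mnmP => i; rewrite mulmnE mnm_sumE sum_nat_const mulnC. Qed.

Section LeadingTerm.
Variables (R : comNzRingType) (n : nat) (mf : measure n).
Implicit Types (p q : {mpoly R[n]}) (c d : R) (M N : 'X_{1..n}).

Lemma mmeasureM_le p q :
  (mmeasure mf (p * q) <= (mmeasure mf p + mmeasure mf q).-1)%N.
Proof.
rewrite {1}mmeasureE; apply/bigmax_leqP_seq => m /msuppM_le /allpairsP.
case=> [[m1 m2] /= [m1p m2q ->]] _; rewrite mfD.
by have := mmeasure_mnm_lt mf m1p; have := mmeasure_mnm_lt mf m2q; lia.
Qed.

(* [mmeasure] is one more than the largest weight in the support, so every
   monomial of [Q] weighs strictly less than [M]. *)
Definition lead_term p c M : Prop :=
  exists2 Q, p = c *: 'X_[M] + Q & (mmeasure mf Q <= mf M)%N.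

Lemma lead_term_coef p c M : lead_term p c M -> p@_M = c.
Proof.
case=> Q -> /mmeasure_mnm_ge; rewrite -mcoeff_eq0 => /eqP Q0.
by rewrite mcoeffD mcoeffZ mcoeffX eqxx mulr1 Q0 addr0.
Qed.

Lemma lead_term1 : lead_term 1 1 0%MM.
Proof. by exists 0; rewrite ?mmeasure0 // mpolyX0 scale1r addr0. Qed.

Lemma lead_termX (i : 'I_n) : lead_term 'X_i 1 U_(i)%MM.
Proof. by exists 0; rewrite ?mmeasure0 // scale1r addr0. Qed.

Lemma lead_termZ p c M d : lead_term p c M -> lead_term (d *: p) (d * c) M.
Proof.
case=> Q -> QM; exists (d *: Q); first by rewrite scalerDr scalerA.
exact: leq_trans (mmeasureZ_le _ _ _) QM.
Qed.

Lemma lead_termM p q c d M N :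
  lead_term p c M -> lead_term q d N -> lead_term (p * q) (c * d) (M + N).
Proof.
case=> P -> PM [Q -> QN].
exists (c *: ('X_[M] * Q) + d *: (P * 'X_[N]) + P * Q).
  by rewrite mpolyXD mulrDl !mulrDr -!scalerAl -!scalerAr scalerA !addrA.
have bound_mul (x y : {mpoly R[n]}) (b1 b2 : nat) :
    (mmeasure mf x <= b1)%N -> (mmeasure mf y <= b2)%N ->
    (mmeasure mf (x * y) <= (b1 + b2).-1)%N.
  by move=> hx hy; apply: leq_trans (mmeasureM_le x y) _; lia.
have XM := eq_leq (mmeasureX R mf M); have XN := eq_leq (mmeasureX R mf N).
rewrite mfD; apply: leq_trans (mmeasureD_le _ _ _) _; rewrite geq_max.
apply/andP; split; last by apply: leq_trans (bound_mul _ _ _ _ PM QN) _; lia.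
apply: leq_trans (mmeasureD_le _ _ _) _; rewrite geq_max.
apply/andP; split; apply: leq_trans (mmeasureZ_le _ _ _) _.
  by apply: leq_trans (bound_mul _ _ _ _ XM QN) _; lia.
by apply: leq_trans (bound_mul _ _ _ _ PM XN) _; lia.
Qed.

Lemma lead_term_linear (P : pred 'I_n) (c : 'I_n -> R) (t : 'I_n) :
  P t -> (forall i, P i -> i != t -> mf U_(i)%MM < mf U_(t)%MM)%N ->
  lead_term (\sum_(i | P i) c i *: 'X_i) (c t) U_(t)%MM.
Proof.
move=> Pt lt_t; rewrite (bigD1 t) //=; eexists; first reflexivity.
apply: leq_trans (mmeasure_sum _ _ _ _) _; apply/bigmax_leqP => i /andP [Pi it].
by rewrite (leq_trans (mmeasureZ_le _ _ _)) // mmeasureX lt_t.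
Qed.

Definition signed_lead_term p M : Prop := exists2 c, c ^+ 2 = 1 & lead_term p c M.

Lemma signed_lead_term_prod (I : Type) (r : seq I) (P : pred I)
    (F : I -> {mpoly R[n]}) (M : I -> 'X_{1..n}) :
  (forall i, P i -> signed_lead_term (F i) (M i)) ->
  signed_lead_term (\prod_(i <- r | P i) F i) (\sum_(i <- r | P i) M i)%MM.
Proof.
move=> FP; elim/big_rec2: _ => [|i p N Pi [d d2 lead_p]].
  by exists 1; [exact: expr1n | exact: lead_term1].
have [c c2 lead_F] := FP i Pi.
by exists (c * d); [rewrite exprMn c2 d2 mulr1 | exact: lead_termM].
Qed.

End LeadingTerm.

Lemma mindepS n (Cs : {set {set 'I_n}}) (S T : {set 'I_n}) :
  S \subset T -> mindep Cs T -> mindep Cs S.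
Proof.
move=> ST /forall_inP indepT; apply/forall_inP => C CsC.
by apply: contra (indepT C CsC) => /subset_trans; apply.
Qed.

Section FundamentalCocircuit.
Variables (n : nat) (Cs : {set {set 'I_n}}) (B : {set 'I_n}).
Hypothesis basisB : mbasis Cs B.
Local Notation D := (fund_cocircuit Cs B).

Lemma meets_all_bases_fund j : j \in B -> meets_all_bases Cs (j |: ~: B).
Proof.
move=> jB; apply/forall_inP => S /andP [indepS /forallP maxS].
apply: contraT => /negPn /eqP disjS.
have SjB : S \subset B :\ j.
  apply/subsetP => x xS; apply: contraT => xNjB.
  have : x \in (j |: ~: B) :&: S.
    by rewrite !inE xS andbT; move: xNjB; rewrite !inE negb_and negbK.
  by rewrite disjS inE.
have jS : j \notin S by apply/negP => /(subsetP SjB); rewrite !inE eqxx.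
have indep_jS : mindep Cs (j |: S).
  apply: mindepS (proj1 (andP basisB)).
  by rewrite subUset sub1set jB (subset_trans SjB) ?subD1set.
by have := maxS j; rewrite jS indep_jS.
Qed.

Lemma fund_cocircuit_spec j :
  j \in B -> [/\ D j \in cocircuits Cs, j \in D j & D j \subset j |: ~: B].
Proof.
move=> jB; rewrite /fund_cocircuit; case: pickP => [E /and3P [] //| noneP].
have [E /minsetP [meetsE minE] sub] := minset_exists (meets_all_bases_fund jB).
have coE : E \in cocircuits Cs.
  rewrite /cocircuits inE meetsE; apply/forall_inP => E' ltE'; apply/negP => meetsE'.
  by move: (ltE'); rewrite (minE E' meetsE' (proper_sub ltE')) properxx.
have jE : j \in E.
  move/forall_inP: meetsE => /(_ B basisB) /set0Pn [x /setIP [xE xB]].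
  by have := subsetP sub x xE; rewrite !inE xB orbF => /eqP <-.
by have := noneP E; rewrite coE jE sub.
Qed.

Lemma fund_cocircuit_notin j i : j \in B -> i \in D j -> i != j -> i \notin B.
Proof.
move=> jB iD ij; have [_ _ /subsetP sub] := fund_cocircuit_spec jB.
by have := sub i iD; rewrite !inE (negbTE ij).
Qed.

End FundamentalCocircuit.

Section Orthogonality.
Variables (k : fieldType) (n : nat) (Cs : {set {set 'I_n}}).
Variables (sg sgs : {set 'I_n} -> 'I_n -> k).
Hypotheses (sg_signing : signing Cs sg) (sgs_signing : signing (cocircuits Cs) sgs).
Hypothesis sg_orthogonal : forall C D, C \in Cs -> D \in cocircuits Cs ->
  \sum_(e < n) sg C e * sgs D e = 0.

Lemma circuit_cocircuit_meet C D x :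
  C \in Cs -> D \in cocircuits Cs -> x \in C -> x \in D ->
  exists2 e, e \in C :&: D & e != x.
Proof.
move=> CsC coD xC xD; apply/exists_inP; apply: contraT => /exists_inPn onlyx.
have sign_neq0 (y : k) : y = 1 \/ y = -1 -> y != 0.
  by case=> ->; rewrite ?oppr_eq0 oner_eq0.
have := sg_orthogonal CsC coD; rewrite (bigD1 x) //= big1 ?addr0.
  have sgx := sign_neq0 _ (proj1 (sg_signing CsC x) xC).
  have sgsx := sign_neq0 _ (proj1 (sgs_signing coD x) xD).
  by move/eqP; rewrite (negbTE (mulf_neq0 sgx sgsx)).
move=> e ex; have [eC | /(proj2 (sg_signing CsC e)) ->] := boolP (e \in C); last first.
  by rewrite mul0r.
have [eD | /(proj2 (sgs_signing coD e)) ->] := boolP (e \in D); last by rewrite mulr0.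
by have := onlyx e; rewrite inE eC eD ex => /(_ isT).
Qed.

End Orthogonality.

Section LeadingMonomial.
Variables (k : fieldType) (n : nat) (Cs : {set {set 'I_n}}) (B : {set 'I_n}).
Variables (a : 'I_n -> 'I_n -> k) (sg sgs : {set 'I_n} -> 'I_n -> k).
Hypothesis basisB : mbasis Cs B.
Hypothesis B_upper : forall i j : 'I_n, i \notin B -> j \in B -> (i < j)%N.
Hypotheses (sg_signing : signing Cs sg) (sgs_signing : signing (cocircuits Cs) sgs).
Hypothesis sg_orthogonal : forall C D, C \in Cs -> D \in cocircuits Cs ->
  \sum_(e < n) sg C e * sgs D e = 0.
Local Notation D := (fund_cocircuit Cs B).
Hypothesis a_sgs : forall j i, j \in B -> a j i = sgs (D j) i.
Local Notation x_ := (subst_var Cs B a).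

Lemma fund_cocircuit_sign j i : j \in B -> i \in D j -> a j i ^+ 2 = 1.
Proof.
move=> jB iD; have [coD _ _] := fund_cocircuit_spec basisB jB.
by rewrite a_sgs //; case: (proj1 (sgs_signing coD i) iD) => ->; rewrite ?sqrrN expr1n.
Qed.

Lemma fund_cocircuit_meet C j : C \in Cs -> j \in C -> j \in B ->
  exists2 e, e \in C :&: D j & e != j.
Proof.
move=> CsC jC jB; have [coD jD _] := fund_cocircuit_spec basisB jB.
exact: (circuit_cocircuit_meet sg_signing sgs_signing sg_orthogonal CsC coD jC jD).
Qed.

Lemma subst_var_lead (mf : measure n) j t : j \in B -> t \in D j -> t != j ->
  (forall i, i \in D j -> i != j -> i != t -> mf U_(i)%MM < mf U_(t)%MM)%N ->
  signed_lead_term mf (x_ j) U_(t)%MM.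
Proof.
move=> jB tD tj lt_t; rewrite /subst_var jB.
have [_ jD _] := fund_cocircuit_spec basisB jB.
exists (- (a j j)^-1 * a j t).
  by rewrite exprMn sqrrN exprVn !fund_cocircuit_sign // invr1 mulr1.
apply: lead_termZ; apply: lead_term_linear => [|i /andP [iD ij]]; last exact: lt_t.
by rewrite tD tj.
Qed.

Lemma pC_coef_sqr (mf : measure n) C (t : 'I_n -> 'I_n) :
  (forall j, j \in Cbar C -> signed_lead_term mf (x_ j) U_(t j)%MM) ->
  (pC Cs B a C)@_(\sum_(j in Cbar C) U_(t j)%MM)%MM ^+ 2 = 1.
Proof.
move=> lead; have [c c2] := signed_lead_term_prod (P := mem (Cbar C)) (index_enum _) lead.
by move=> /lead_term_coef ->.
Qed.

(* [C \subset i0 |: B] with [i0 \notin B] means [C = ci(B, e_i0)]. *)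
Lemma fund_circuit_lead C i0 : C \in Cs -> i0 \notin B -> C \subset i0 |: B ->
  forall j, j \in Cbar C ->
  signed_lead_term (wdeg (fun i => nat_of_bool (i == i0))) (x_ j) U_(i0)%MM.
Proof.
move=> CsC i0B /subsetP CB j; rewrite inE => /andP [jC /existsP [e /andP [eC ej]]].
have jB : j \in B.
  apply: contraT => jNB; have /setU1P [ji0 | jB] := CB j jC; last by rewrite jB in jNB.
  have /setU1P [ei0 | eB] := CB e eC; first by rewrite ei0 -ji0 ltnn in ej.
  by have := B_upper jNB eB; lia.
have [f /setIP [fC fD] fj] := fund_cocircuit_meet CsC jC jB.
have i0D : i0 \in D j.
  have /setU1P [<- // | fB] := CB f fC.
  by have := fund_cocircuit_notin basisB jB fD fj; rewrite fB.
apply: subst_var_lead => //; first by apply: contraNneq i0B => ->.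
by move=> i _ _ ii0; rewrite /= !wdegU eqxx (negbTE ii0).
Qed.

Lemma didx_lead C j : C \in Cs -> j \in C ->
  signed_lead_term (wdeg (fun i : 'I_n => (n - i)%N)) (x_ j) U_(didx Cs B j)%MM.
Proof.
move=> CsC jC; rewrite /didx; have [jB | jNB] := boolP (j \in B); last first.
  by rewrite /subst_var (negbTE jNB); exists 1; [exact: expr1n | exact: lead_termX].
have [_ jD _] := fund_cocircuit_spec basisB jB.
have [f /setIP [_ fD] fj] := fund_cocircuit_meet CsC jC jB.
have ltfj := B_upper (fund_cocircuit_notin basisB jB fD fj) jB.
case: arg_minnP => // t tD t_min.
have tj : t != j by rewrite -(inj_eq val_inj) /=; have := t_min f fD; lia.
apply: subst_var_lead => // i iD _; rewrite -(inj_eq val_inj) /= !wdegU => it.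
by have := t_min i iD; have := ltn_ord i; lia.
Qed.

End LeadingMonomial.

Unset Implicit Arguments.
Set Strict Implicit.

Theorem lemma4p2 (k : fieldType) (n r : nat) (Cs : {set {set 'I_n}})
    (a : 'I_n -> 'I_n -> k) :
  let B : {set 'I_n} := [set i : 'I_n | (n - r <= i)%N] in
  matroid_circuits Cs -> regular_matroid Cs -> (r <= n)%N ->
  mbasis Cs B -> admissible Cs B a ->
  forall C : {set 'I_n}, C \in Cs ->
    (pC Cs B a C)@_(mC Cs B C) = 1 \/ (pC Cs B a C)@_(mC Cs B C) = -1.
Proof.
move=> B _ _ _ basisB [sg [sgs [sgs_signing sg_signing sg_orthogonal a_sgs]]] C CsC.
have B_upper (i j : 'I_n) : i \notin B -> j \in B -> (i < j)%N by rewrite !inE; lia.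
suff /eqP : (pC Cs B a C)@_(mC Cs B C) ^+ 2 = 1.
  by rewrite sqrf_eq1 => /orP [] /eqP; [left | right].
rewrite /mC; case: pickP => [i0 /andP [i0B CB] | _].
  rewrite -mnm_sum_const; apply: pC_coef_sqr (fund_circuit_lead basisB B_upper
    sg_signing sgs_signing sg_orthogonal a_sgs CsC i0B CB).
apply: pC_coef_sqr => j /setIdP [jC _].
exact: (didx_lead basisB B_upper sg_signing sgs_signing sg_orthogonal a_sgs CsC jC).
Qed.
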